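(* Let $n\ge 1$ and let $G=K_{n_1,\dots,n_p}$ be a complete $p$-partite graph of order $2^n$ (so $n_1+\dots+n_p=2^n$, each $n_i\ge 1$). Then $\mathrm{dil}(G,Q_n)=n$ if at least one $n_i$ is odd, and $\mathrm{dil}(G,Q_n)\le n-1$ if all $n_i$ are even. *)

From mathcomp Require Import all_boot.
Set Implicit Arguments. Unset Strict Implicit. Unset Printing Implicit Defensive.

Definition cube (n : nat) := {ffun 'I_n -> bool}.

(* Distance in Q_n = Hamming distance. *)
Definition hamming (n : nat) (x y : cube n) : nat := #|[set i | x i != y i]|.

(* Dilation of an embedding f of the graph (V, adj) into Q_n:
   maximal Q_n-distance between images of adjacent vertices (0 if no edges). *)
Definition dilation (V : finType) (adj : rel V) (n : nat) (f : V -> cube n) : nat :=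
  \max_(u : V) \max_(v : V | adj u v) hamming (f u) (f v).

(* The default value n only matters if no
   injection exists, which is excluded by the hypotheses of the theorem. *)
Definition dil (V : finType) (adj : rel V) (n : nat) : nat :=
  \big[minn/n]_(f : {ffun V -> cube n} | injectiveb f) dilation adj f.

(* Complete p-partite graph K_{n_1,...,n_p}: vertex (i, k) is the k-th vertex
   of part i; two vertices are adjacent iff they lie in different parts. *)
Definition cmp_vertex (p : nat) (ns : 'I_p -> nat) : finType :=
  {i : 'I_p & 'I_(ns i)}.

Definition cmp_adj (p : nat) (ns : 'I_p -> nat) : rel (cmp_vertex ns) :=
  fun u v => tag u != tag v.
Arguments cmp_adj {p} ns.

From mathcomp Require Import all_boot.
From mathcomp Require Import zify.
Set Implicit Arguments. Unset Strict Implicit.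

(* Lower bound: a bijection f onto Q_n maps an odd part P to an odd set f(P).
   Antipodality x |-> ~x is a fixed-point-free involution of Q_n, so an odd set
   is not closed under it: some x = f u with u in P has its antipode ~x = f v
   outside f(P).  Then u and v lie in different parts, hence are adjacent, and
   their images are at distance n.
   Upper bound: when all parts are even, pair the vertices of each part two by
   two, send the pairs injectively into the half-cube {x | x_0 = 0} and map the
   two members of a pair to an image and its antipode.  Two vertices of
   different parts come from distinct pairs; if their images lie in the same
   half-cube they agree at coordinate 0, otherwise they are of the form x and
   ~y with x <> y, which agree wherever x and y differ.  Either way the
   distance is at most n - 1. *)

Section Hypercube.

Variable n : nat.
Implicit Types (x y : cube n) (B : {set cube n}).

Definition compl x : cube n := [ffun j => ~~ x j].

Lemma complK : involutive compl.
Proof. by move=> x; apply/ffunP=> j; rewrite !ffunE negbK. Qed.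

Lemma compl_inj : injective compl.
Proof. exact: inv_inj complK. Qed.

Lemma card_cube : #|{: cube n}| = 2 ^ n.
Proof. by rewrite card_ffun card_bool card_ord. Qed.

Lemma hammingC x y : hamming x y = hamming y x.
Proof. by apply: eq_card => j; rewrite !inE eq_sym. Qed.

Lemma hamming_compl x : hamming x (compl x) = n.
Proof.
rewrite /hamming -[n in RHS]card_ord; apply: eq_card => j.
by rewrite !inE ffunE; case: (x j).
Qed.

Lemma hamming_lt x y j : x j = y j -> hamming x y < n.
Proof.
move=> xyj; rewrite /hamming -[n in _ < n]card_ord -cardsT; apply: proper_card.
rewrite properT; apply/eqP => allj.
by have := in_setT j; rewrite -allj inE xyj eqxx.
Qed.

Lemma hamming_compl_lt x y : x != y -> hamming x (compl y) < n.
Proof.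
case: (pickP (fun j => x j != y j)) => [j /= xyj _ | eq_xy]; last first.
  by case/eqP; apply/ffunP => j; apply/eqP/negbFE/eq_xy.
by apply: (hamming_lt (j := j)); rewrite ffunE; move: xyj; case: (x j); case: (y j).
Qed.

(* The coordinate j splits B into B1 = {x_j = 1} and B0 = {x_j = 0} = ~B1. *)
Lemma compl_closed_card_even (j : 'I_n) B :
  {in B, forall x, compl x \in B} -> ~~ odd #|B|.
Proof.
move=> complB; pose S := [set x : cube n | x j].
have B0E : B :\: S = compl @: (B :&: S).
  apply/setP => x; rewrite !inE; apply/andP/imsetP => [[xj xB] | [y]].
    exists (compl x); last by rewrite complK.
    by rewrite !inE ffunE xj complB.
  by rewrite !inE => /andP[yB yj] ->; rewrite ffunE yj complB.
have card_B0 : #|B :\: S| = #|B :&: S| by rewrite B0E card_imset //; apply: compl_inj.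
by rewrite -(cardsID S) card_B0 addnn odd_double.
Qed.

End Hypercube.

Lemma card_half_cube n : #|[set x : cube n.+1 | ~~ x ord0]| = 2 ^ n.
Proof.
set D := [set x | _].
have DC : ~: D = @compl n.+1 @: D.
  apply/setP => x; rewrite !inE; apply/idP/imsetP => [x0 | [y]].
    by exists (compl x); rewrite ?complK // inE ffunE x0.
  by rewrite inE => y0 ->; rewrite ffunE y0.
have := cardsC D; rewrite DC card_imset; last exact: compl_inj.
rewrite card_cube expnS; lia.
Qed.

Lemma leq_dilation (V : finType) (adj : rel V) n (f : V -> cube n) u v :
  adj u v -> hamming (f u) (f v) <= dilation adj f.
Proof.
move=> uv; apply: leq_trans (leq_bigmax u).
exact: (leq_bigmax_cond (F := fun v => hamming (f u) (f v))).
Qed.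

Lemma leq_bigmin_seq (I : eqType) (r : seq I) (P : pred I) (F : I -> nat) x i0 :
  i0 \in r -> P i0 -> \big[minn/x]_(i <- r | P i) F i <= F i0.
Proof.
elim: r => // a r IHr; rewrite inE big_cons => /orP [/eqP <- Pa | i0r Pi0].
  by rewrite Pa geq_minl.
by case: ifP => _; [apply: leq_trans (geq_minr _ _) _ |]; apply: IHr.
Qed.

Lemma dil_le_dilation (V : finType) (adj : rel V) n (f : {ffun V -> cube n}) :
  injective f -> dil adj n <= dilation adj f.
Proof. by move=> /injectiveP finj; apply: leq_bigmin_seq; rewrite ?mem_index_enum. Qed.

Lemma dil_eq (V : finType) (adj : rel V) n :
  (forall f : {ffun V -> cube n}, injective f -> n <= dilation adj f) ->
  dil adj n = n.
Proof.
move=> dil_ge; apply: (big_rec (fun x => x = n)) => // f x /injectiveP finj ->.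
exact/minn_idPr/dil_ge.
Qed.

Lemma card_tagged_ord p (ns : 'I_p -> nat) :
  #|{: {i : 'I_p & 'I_(ns i)}}| = \sum_(i < p) ns i.
Proof.
rewrite card_tagged sumnE big_map big_enum /=.
by apply: eq_bigr => i _; rewrite card_ord.
Qed.

Lemma card_tag (I : finType) (T_ : I -> finType) (i : I) :
  #|[set u : {i : I & T_ i} | tag u == i]| = #|T_ i|.
Proof.
have -> : [set u : {i : I & T_ i} | tag u == i] = Tagged T_ @: [set: T_ i].
  apply/setP => -[k t]; rewrite inE /=; apply/eqP/imsetP => [ki | [t' _ /(congr1 tag) /= ->]] //.
  by subst k; exists t.
rewrite card_imset ?cardsT // => t t'.
by move/(congr1 (tagged_as (Tagged T_ t))); rewrite !tagged_asE.
Qed.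

Section CompleteMultipartite.

Variables (n p : nat) (ns : 'I_p -> nat).
Hypothesis hsum : \sum_(i < p) ns i = 2 ^ n.

Lemma dilation_ge_odd_part (j : 'I_n) i0 (f : cmp_vertex ns -> cube n) :
  odd (ns i0) -> injective f -> n <= dilation (cmp_adj ns) f.
Proof.
move=> odd_i0 finj.
have f_onto y : exists u, f u = y.
  have := inj_card_onto finj; rewrite card_cube card_tagged_ord hsum leqnn.
  by move=> /(_ isT y) /codomP [u ->]; exists u.
pose P := [set u : cmp_vertex ns | tag u == i0].
have odd_fP : odd #|f @: P| by rewrite card_imset // card_tag card_ord.
have : ~~ [forall x in f @: P, compl x \in f @: P].
  by apply: contraL odd_fP => /forall_inP; exact: (compl_closed_card_even j).
rewrite negb_forall_in => /existsP [_ /andP [/imsetP [u Pu ->] notin_fP]].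
have [v fv] := f_onto (compl (f u)).
have uv : cmp_adj ns u v.
  move: Pu; rewrite /cmp_adj inE => /eqP ->; apply/eqP => vi0.
  by move: notin_fP; rewrite -fv imset_f // inE vi0.
by move: (leq_dilation f uv); rewrite fv hamming_compl.
Qed.

End CompleteMultipartite.

Lemma inj_into_set (W T : finType) (A : {set T}) :
  #|W| <= #|A| -> exists g : W -> T, injective g /\ forall w, g w \in A.
Proof.
move=> le_WA; exists (fun w => enum_val (widen_ord le_WA (enum_rank w))); split.
  move=> w w' /enum_val_inj /(congr1 val) /= /ord_inj eq_rank.
  exact: enum_rank_inj eq_rank.
by move=> w; apply: enum_valP.
Qed.

Lemma half_ord_lt m k : ~~ odd m -> k < m -> k./2 < m./2.
Proof. by move=> /negbTE m_even km; have := odd_double_half m; rewrite m_even; lia. Qed.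

Section EvenParts.

Variables (n p : nat) (ns : 'I_p -> nat).
Hypothesis hsum : \sum_(i < p) ns i = 2 ^ n.+1.
Hypothesis ns_even : forall i, ~~ odd (ns i).

Definition pair_of (u : cmp_vertex ns) : {i : 'I_p & 'I_(ns i)./2} :=
  Tagged (fun i => 'I_(ns i)./2)
    (Ordinal (half_ord_lt (ns_even (tag u)) (ltn_ord (tagged u)))).

Lemma pair_of_inj u v :
  pair_of u = pair_of v -> odd (tagged u) = odd (tagged v) -> u = v.
Proof.
case: u v => [i k] [j l] /= uv.
have ij : i = j by have := congr1 tag uv.
subst j; move: uv => /(congr1 (tagged_as (pair_of (Tagged (fun i => 'I_(ns i)) k)))).
rewrite !tagged_asE => /(congr1 val) /= kl odd_kl.
apply/congr1/val_inj => /=.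
by have := odd_double_half k; have := odd_double_half l; rewrite kl odd_kl; lia.
Qed.

Lemma card_pairs : #|{: {i : 'I_p & 'I_(ns i)./2}}| = 2 ^ n.
Proof.
rewrite card_tagged_ord; apply/eqP; rewrite -(eqn_pmul2l (isT : 0 < 2)) -expnS -hsum.
rewrite big_distrr /=; apply/eqP/eq_bigr => i _.
by have := odd_double_half (ns i); rewrite (negbTE (ns_even i)) -muln2; lia.
Qed.

Lemma dilation_even_parts :
  exists f : {ffun cmp_vertex ns -> cube n.+1},
    injective f /\ dilation (cmp_adj ns) f <= n.
Proof.
have [g [ginj g0]] := @inj_into_set _ _ [set x : cube n.+1 | ~~ x ord0]
  (eq_leq (etrans card_pairs (esym (card_half_cube n)))).
have {}g0 w : g w ord0 = false by have := g0 w; rewrite inE => /negbTE.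
pose f : {ffun cmp_vertex ns -> cube n.+1} := [ffun u : cmp_vertex ns =>
  if odd (tagged u) then compl (g (pair_of u)) else g (pair_of u)].
have f0 u : f u ord0 = odd (tagged u).
  by rewrite ffunE; case: ifP => _; rewrite ?ffunE g0.
exists f; split => [u v fuv | ].
  have odd_uv : odd (tagged u) = odd (tagged v) by rewrite -!f0 fuv.
  apply: (pair_of_inj _ odd_uv); apply: ginj; move: fuv; rewrite !ffunE odd_uv.
  by case: ifP => // _; apply: compl_inj.
apply/bigmax_leqP => u _; apply/bigmax_leqP => v uv; rewrite -ltnS.
have [odd_uv | odd_uv] := eqVneq (odd (tagged u)) (odd (tagged v)).
  by apply: (hamming_lt (j := ord0)); rewrite !f0.
have g_neq : g (pair_of u) != g (pair_of v).
  by apply: contra uv => /eqP /ginj /(congr1 tag) /= ->.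
move: odd_uv; rewrite !ffunE; case: (odd _); case: (odd _) => //= _.
  by rewrite hammingC; apply: hamming_compl_lt; rewrite eq_sym.
exact: hamming_compl_lt.
Qed.

End EvenParts.

Theorem mainTheorem4 (n p : nat) (ns : 'I_p -> nat)
  (hn : 1 <= n) (hpos : forall i, 1 <= ns i)
  (hsum : \sum_(i < p) ns i = 2 ^ n) :
  ((exists i, odd (ns i)) -> dil (cmp_adj ns) n = n) /\
  ((forall i, ~~ odd (ns i)) -> dil (cmp_adj ns) n <= n - 1).
Proof.
split => [[i0 odd_i0] | ns_even].
  by apply: dil_eq => f; apply: (dilation_ge_odd_part hsum (Ordinal hn) odd_i0).
case: n hn hsum => // n _ hsum.
have [f [finj f_dil]] := dilation_even_parts hsum ns_even.
by rewrite subn1; apply: leq_trans (dil_le_dilation _ finj) f_dil.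
Qed.
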